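(* Let $G$ be a connected graph with a list-assignment $L$ such that $|L(u)|\ge\deg(u)+1$ for all $u\in V(G)$, and let $\alpha,\beta$ be $L$-colourings of $G$. Suppose there exist $v\in V(G)$ and distinct $w_1,w_2\in N(v)$ such that $\alpha(w_1)=\beta(w_1)$, $\alpha(w_1)=\alpha(w_2)$, $\beta(w_1)=\beta(w_2)$, and $G-\{w_1,w_2\}$ is connected. Then $\alpha\sim\beta$; furthermore, there exists a recolouring sequence from $\alpha$ to $\beta$ that recolours neither $w_1$ nor $w_2$.
   Context: An $L$-colouring is a proper colouring $\varphi$ with $\varphi(v)\in L(v)$ for all $v$. $\alpha\sim\beta$ means $\alpha$ can be transformed into $\beta$ by a sequence of single-vertex recolouring steps, each changing the colour of one vertex to another colour of its list and keeping the colouring a proper $L$-colouring. (In the paper's terminology, $w_1,w_2$ is a ''very good pair'' for $v$ with respect to both $\alpha$ and $\beta$.) *)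

From mathcomp Require Import all_boot.
Set Implicit Arguments. Unset Strict Implicit. Unset Printing Implicit Defensive.

(* Colours live in an arbitrary eqType C;
   lists L : T -> seq C (the list L(u) is the set of its elements). *)

Definition simple_graph (T : finType) (e : rel T) : Prop :=
  symmetric e /\ irreflexive e.

Definition deg (T : finType) (e : rel T) (u : T) : nat := #|[set x | e u x]|.

Definition lsize (C : eqType) (l : seq C) : nat := size (undup l).

Definition connected_graph (T : finType) (e : rel T) : Prop :=
  forall x y : T, connect e x y.

Definition connected_minus (T : finType) (e : rel T) (W : pred T) : Prop :=
  forall x y : T, x \notin W -> y \notin W ->
    connect [rel a b | [&& e a b, a \notin W & b \notin W]] x y.

Definition Lcolouring (T : finType) (C : eqType) (e : rel T) (L : T -> seq C)
  (phi : T -> C) : Prop :=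
  (forall v, phi v \in L v) /\ (forall u v, e u v -> phi u != phi v).

Definition recol_step (T : finType) (C : eqType) (e : rel T) (L : T -> seq C)
  (x : T) (phi psi : T -> C) : Prop :=
  [/\ Lcolouring e L phi, Lcolouring e L psi, phi x != psi x &
      forall y, y != x -> phi y = psi y].

Inductive recol_seq (T : finType) (C : eqType) (e : rel T) (L : T -> seq C)
  (A : pred T) : (T -> C) -> (T -> C) -> Prop :=
| recol_refl phi : Lcolouring e L phi -> recol_seq e L A phi phi
| recol_cons phi chi psi x :
    x \in A -> recol_step e L x phi chi -> recol_seq e L A chi psi ->
    recol_seq e L A phi psi.

Definition recolourable (T : finType) (C : eqType) (e : rel T) (L : T -> seq C)
  (alpha beta : T -> C) : Prop := recol_seq e L predT alpha beta.

From mathcomp Require Import all_boot zify.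
From Stdlib Require Import FunctionalExtensionality.
Set Implicit Arguments. Unset Strict Implicit. Unset Printing Implicit Defensive.

(* Let S = V - {w1, w2}. Outside S both colourings use the single colour
   c = alpha w1, so a vertex x of S loses at most c from its list but all its
   neighbours outside S from its degree: the colours available at x in G[S]
   number at least deg_S x + 1, and at least deg_S v + 2 at v, which has the two
   neighbours w1, w2 outside S. In that situation any two colourings are joined
   by recolourings inside S. Remove a vertex u of G[S] farthest from v. Colour
   G[S] - u greedily towards v, keeping alpha u at u and forbidding beta u at
   its neighbours: each neighbour loses two colours but also one degree, and the
   slack at v finishes the greedy colouring. Recolour alpha into this colouring
   inside S - u by induction, switch u to beta u, and conclude by induction. *)

Lemma lsize_subset (C : eqType) (l1 l2 : seq C) :
  {subset l1 <= l2} -> lsize l1 <= lsize l2.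
Proof.
move=> sub12; apply: uniq_leq_size; first exact: undup_uniq.
by move=> c; rewrite !mem_undup; apply: sub12.
Qed.

Lemma lsize_cat (C : eqType) (l1 l2 : seq C) : lsize (l1 ++ l2) <= size l1 + lsize l2.
Proof.
rewrite /lsize undup_cat size_cat leq_add2r size_filter.
exact: leq_trans (count_size _ _) (size_undup _).
Qed.

Lemma connect_rank (T : finType) (R : rel T) (w : T) :
  exists r : T -> nat, forall x, connect R w x -> x != w ->
    exists2 y, R y x & r y < r x.
Proof.
(* r x is the length of a shortest R-path from w to x, and 0 if there is none. *)
pose P x n := [exists p : n.-tuple T, path R w p && (last w p == x)] || ~~ connect R w x.
have P_path p : path R w p -> P (last w p) (size p).
  by move=> wp; apply/orP; left; apply/existsP; exists (in_tuple p); rewrite /= wp eqxx.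
have P_ex x : exists n, P x n.
  case/boolP: (connect R w x) => [/connectP[p wp ->] | nc]; last first.
    by exists 0; rewrite /P nc orbT.
  by exists (size p); apply: P_path.
exists (fun x => ex_minn (P_ex x)) => x wx xw.
case: (ex_minnP (P_ex x)) => m; rewrite /P wx orbF => /existsP[[p /= /eqP size_p]].
case/lastP: p size_p => [|p y] size_p /andP[wp /eqP px] _; first by rewrite -px eqxx in xw.
move: wp px; rewrite rcons_path last_rcons => /andP[wp Ryx] yx; subst y.
exists (last w p) => //; case: (ex_minnP (P_ex (last w p))) => k _ /(_ _ (P_path p wp)).
by rewrite -size_p size_rcons ltnS.
Qed.

Section Recolouring.
Variables (T : finType) (C : eqType) (e : rel T).
Implicit Types (L : T -> seq C) (f g phi psi : T -> C) (S : {set T}).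
Hypotheses (esym : symmetric e) (eirr : irreflexive e).

Lemma recol_seq_sub L (A B : pred T) phi psi :
  {subset A <= B} -> recol_seq e L A phi psi -> recol_seq e L B phi psi.
Proof.
move=> subAB; elim=> [chi chiL | phi' chi psi' x xA step _ IH]; first exact: recol_refl.
exact: recol_cons (subAB _ xA) step IH.
Qed.

Lemma recol_seq_trans L A phi chi psi :
  recol_seq e L A phi chi -> recol_seq e L A chi psi -> recol_seq e L A phi psi.
Proof. by elim=> // phi' chi' psi' x xA step _ IH /IH; apply: recol_cons xA step. Qed.

Lemma recol_seq_at L (A : pred T) x phi psi :
  x \in A -> Lcolouring e L phi -> Lcolouring e L psi ->
  (forall y, y != x -> phi y = psi y) -> recol_seq e L A phi psi.
Proof.
move=> xA phiL psiL same; have [phipsi_x | neq_x] := eqVneq (phi x) (psi x).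
  have -> : phi = psi.
    by apply: functional_extensionality => y; case: (eqVneq y x) => [->|/same].
  exact: recol_refl.
apply: (recol_cons (chi := psi) xA); [by split | exact: recol_refl].
Qed.

Lemma Lcolouring_sub L L' phi :
  (forall x, {subset L' x <= L x}) -> Lcolouring e L' phi -> Lcolouring e L phi.
Proof. by move=> subL [phiL' proper]; split=> // x; apply/subL/phiL'. Qed.

Definition degIn (S : {set T}) x := #|[set y in S | e x y]|.

Lemma degIn_setD1 S u x : u \in S -> degIn S x = degIn (S :\ u) x + e x u.
Proof.
move=> uS; rewrite /degIn (cardsD1 u) inE uS /= addnC; congr (_ + _).
by apply: eq_card => y; rewrite !inE andbA.
Qed.

Lemma deg_degIn S x : deg e x = degIn S x + degIn (~: S) x.
Proof.
rewrite /deg /degIn -(cardsID S [set y | e x y]); congr (_ + _).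
  by apply: eq_card => y; rewrite !inE andbC.
by apply: eq_card => y; rewrite !inE andbC.
Qed.

Definition avail (L : T -> seq C) (f : T -> C) (S : {set T}) x :=
  [seq c <- L x | [forall y, e x y && (y \notin S) ==> (f y != c)]].

Lemma availP L f S x c :
  reflect (c \in L x /\ forall y, e x y -> y \notin S -> f y != c) (c \in avail L f S x).
Proof.
rewrite mem_filter andbC; apply: (iffP andP) => -[cL H]; split=> //.
  by move=> y xy yS; move/forallP/(_ y): H; rewrite xy yS.
by apply/forallP => y; apply/implyP => /andP[/H]; apply.
Qed.

Lemma lsize_avail_setD1 L L' f f' S u x ex :
  {in ~: S, f' =1 f} -> (e x u -> f' u \in ex) ->
  (forall c, c \in L x -> (e x u ==> (c \notin ex)) -> c \in L' x) ->
  lsize (avail L f S x) <= lsize (avail L' f' (S :\ u) x) + e x u * size ex.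
Proof.
move=> off_S f'u subL.
have sub c : c \in avail L f S x -> (e x u ==> (c \notin ex)) ->
    c \in avail L' f' (S :\ u) x.
  move=> /availP[cL cfree] /[dup] /(subL _ cL) cL' /implyP c_ex; apply/availP.
  split=> // y xy; rewrite !inE negb_and negbK => /orP[/eqP yu|yS].
    by subst y; apply: contraNneq (c_ex xy) => <-; apply: f'u.
  by rewrite off_S ?inE // cfree.
case: (e x u) sub => /= sub; rewrite ?mul1n ?mul0n ?addn0.
  rewrite addnC; apply: leq_trans (lsize_cat ex _); apply: lsize_subset => c cA.
  by rewrite mem_cat; case: (boolP (c \in ex)) => //= c_ex; apply: sub.
by apply: lsize_subset => c cA; apply: sub.
Qed.

Lemma degIn_avail_setD1 L L' f f' S u x ex m :
  u \in S -> {in ~: S, f' =1 f} -> (e x u -> f' u \in ex) ->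
  (forall c, c \in L x -> (e x u ==> (c \notin ex)) -> c \in L' x) ->
  degIn S x + m + (size ex).-1 <= lsize (avail L f S x) ->
  degIn (S :\ u) x + m <= lsize (avail L' f' (S :\ u) x).
Proof.
move=> uS off_S f'u subL; rewrite (degIn_setD1 x uS).
by have := lsize_avail_setD1 off_S f'u subL; case: (e x u) => /=; lia.
Qed.

Lemma degIn_avail_update L f f' S u x m :
  u \in S -> {in ~: S, f' =1 f} ->
  degIn S x + m <= lsize (avail L f S x) ->
  degIn (S :\ u) x + m <= lsize (avail L f' (S :\ u) x).
Proof.
move=> uS off_S bound.
apply: (degIn_avail_setD1 (L := L) (L' := L) (ex := [:: f' u]) uS off_S).
- by rewrite mem_head.
- by move=> c ->.
- by rewrite addn0.
Qed.

Section Ranked.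
Variables (v : T) (r : T -> nat).

(* r plays the role of the distance to v in G[S]. *)
Definition ranked S := forall x, x \in S -> x != v ->
  exists2 y, (y \in S) && e x y & r y < r x.

Lemma ranked_degIn S x : ranked S -> x \in S -> x != v -> 0 < degIn S x.
Proof.
move=> rk xS xv; have [y /andP[yS xy] _] := rk x xS xv.
by rewrite card_gt0; apply/set0Pn; exists y; rewrite inE yS.
Qed.

(* A vertex of maximal rank is not a cut vertex. *)
Lemma ranked_setD1 S x : ranked S -> x \in S -> x != v ->
  exists u, [/\ u \in S, u != v & ranked (S :\ u)].
Proof.
move=> rk xS xv; have xSv : x \in S :\ v by rewrite !inE xv.
have [u uSv u_max] := arg_maxnP r xSv; have /setD1P[uv uS] : u \in S :\ v := uSv.
exists u; split=> // y; rewrite !inE => /andP[yu yS] yv.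
have [z /andP[zS yz] rzy] := rk y yS yv.
exists z => //; rewrite !inE zS yz !andbT.
apply: contraTneq rzy => ->; rewrite -leqNgt.
have ySv : y \in S :\ v by rewrite !inE yv.
exact: u_max ySv.
Qed.

Lemma ranked_peel S x : ranked S -> x \in S ->
  exists u, [/\ u \in S, ranked (S :\ u) & u = v \/ 0 < degIn S u].
Proof.
move=> rk xS; have [y /andP[yS yv] | only_v] := pickP [pred y | (y \in S) && (y != v)].
  have [u [uS uv rk_u]] := ranked_setD1 rk yS yv.
  by exists u; split=> //; right; apply: ranked_degIn.
have vS : v \in S by move: (only_v x) => /=; rewrite xS /= => /negbFE/eqP <-.
exists v; split; [by [] | | by left].
by move=> y /setD1P[yv yS]; move: (only_v y) => /=; rewrite yS yv.
Qed.

Lemma ranked_extend_colouring L S f :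
  ranked S ->
  (forall x, x \notin S -> f x \in L x) ->
  (forall x y, x \notin S -> y \notin S -> e x y -> f x != f y) ->
  (forall x, x \in S -> degIn S x <= lsize (avail L f S x)) ->
  (v \in S -> degIn S v < lsize (avail L f S v)) ->
  exists2 g, Lcolouring e L g & {in ~: S, g =1 f}.
Proof.
have [n] := ubnP #|S|; elim: n S f => // n IH S f /ltnSE leSn.
move=> rk fL fproper free free_v; have [S0|/set0Pn[x xS]] := eqVneq S set0.
  exists f => //; subst S.
  by split=> [x|x y]; [apply: fL | apply: fproper]; rewrite inE.
have [u [uS rk_u u_deg]] := ranked_peel rk xS.
have [c /availP[cL c_free]] : exists c, c \in avail L f S u.
  have : 0 < lsize (avail L f S u).
    case: u_deg => [uv | deg_u]; last exact: leq_trans deg_u (free u uS).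
    by subst u; apply: leq_ltn_trans (free_v uS).
  by case: (avail L f S u) => // c s _; exists c; rewrite mem_head.
pose f' := [eta f with u |-> c].
have off_S : {in ~: S, f' =1 f}.
  by move=> y; rewrite inE /=; case: eqP => // ->; rewrite uS.
have ltSn : #|S :\ u| < n by move: leSn; rewrite (cardsD1 u) uS.
have f'L y : y \notin S :\ u -> f' y \in L y.
  by rewrite /= !inE negb_and negbK; case: eqP => [-> _ | _ /= /fL].
have f'proper y z : y \notin S :\ u -> z \notin S :\ u -> e y z -> f' y != f' z.
  rewrite /= !inE !negb_and !negbK.
  case: (eqVneq y u) => [->|yu]; case: (eqVneq z u) => [->|zu] //=.
  + by rewrite eirr.
  + by move=> _ zS uz; rewrite eq_sym; apply: c_free.
  + by move=> yS _ yu'; apply: c_free; rewrite // esym.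
  + exact: fproper.
have free_u y : y \in S :\ u -> degIn (S :\ u) y <= lsize (avail L f' (S :\ u) y).
  move=> /setD1P[_ yS]; rewrite -[degIn _ y]addn0.
  by apply: degIn_avail_update uS off_S _; rewrite addn0 free.
have free_uv : v \in S :\ u -> degIn (S :\ u) v < lsize (avail L f' (S :\ u) v).
  move=> /setD1P[_ vS]; rewrite -addn1.
  by apply: degIn_avail_update uS off_S _; rewrite addn1 free_v.
have [g gL g_off] := IH (S :\ u) f' ltSn rk_u f'L f'proper free_u free_uv.
exists g => // y yS; rewrite g_off ?off_S // !inE negb_and.
by move: yS; rewrite inE => ->; rewrite orbT.
Qed.

Lemma ranked_colouring_avoiding L S a b u :
  u \in S -> ranked (S :\ u) ->
  Lcolouring e L a -> Lcolouring e L b -> {in ~: S, a =1 b} ->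
  (forall x, x \in S -> degIn S x + 1 <= lsize (avail L a S x)) ->
  degIn S v + 2 <= lsize (avail L a S v) ->
  exists2 g, Lcolouring e L g /\ {in ~: (S :\ u), g =1 a} &
             forall x, e u x -> g x != b u.
Proof.
move=> uS rk_u [aL aproper] [bL bproper] ab free free_v.
pose L' x := [seq c <- L x | ~~ e u x || (c != b u)].
have subL' x c : c \in L x -> e x u ==> (c \notin [:: a u; b u]) -> c \in L' x.
  move=> cL /implyP c_ab; rewrite mem_filter cL andbT -implybE.
  by apply/implyP; rewrite esym => /c_ab; rewrite !inE negb_or => /andP[].
have aL' x : x \notin S :\ u -> a x \in L' x.
  move=> xSu; rewrite mem_filter aL andbT; case: (boolP (e u x)) => //= ux.
  have xS : x \notin S.
    apply: contra xSu => xS; rewrite !inE xS andbT.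
    by apply: contraTneq ux => ->; rewrite eirr.
  by rewrite ab ?inE // eq_sym bproper.
have shrink x m : degIn S x + (m + 1) <= lsize (avail L a S x) ->
    degIn (S :\ u) x + m <= lsize (avail L' a (S :\ u) x).
  rewrite addnA => bound.
  apply: (degIn_avail_setD1 (L := L) (L' := L') (ex := [:: a u; b u]) uS) => //.
    by rewrite mem_head.
  exact: subL'.
have free' x : x \in S :\ u -> degIn (S :\ u) x <= lsize (avail L' a (S :\ u) x).
  by move=> /setD1P[_ /free]; rewrite -[1]add0n => /shrink; rewrite addn0.
have free'_v : v \in S :\ u -> degIn (S :\ u) v < lsize (avail L' a (S :\ u) v).
  by move=> _; have := shrink v 1 free_v; rewrite addn1.
have [g g'L g_off] :=
  ranked_extend_colouring rk_u aL' (fun x y _ _ => aproper x y) free' free'_v.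
exists g => [|x ux]; last by case: g'L => /(_ x); rewrite mem_filter ux => /andP[].
by split=> //; apply: Lcolouring_sub g'L => x c; rewrite mem_filter => /andP[].
Qed.

Lemma ranked_recol_seq L S a b :
  v \in S -> ranked S ->
  Lcolouring e L a -> Lcolouring e L b -> {in ~: S, a =1 b} ->
  (forall x, x \in S -> degIn S x + 1 <= lsize (avail L a S x)) ->
  degIn S v + 2 <= lsize (avail L a S v) ->
  recol_seq e L [pred x | x \in S] a b.
Proof.
have [n] := ubnP #|S|; elim: n S a b => // n IH S a b /ltnSE leSn.
move=> vS rk aL bL ab free free_v.
have [x /andP[xS xv] | only_v] := pickP [pred x | (x \in S) && (x != v)]; last first.
  apply: (recol_seq_at (x := v) _ aL bL) => [|y yv]; first by rewrite inE.
  have /negbT yS : y \in S = false by move: (only_v y) => /=; rewrite yv andbT.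
  by apply: ab; rewrite inE.
have [u [uS uv rk_u]] := ranked_setD1 rk xS xv.
have [g [gL g_off] g_avoid] := ranked_colouring_avoiding uS rk_u aL bL ab free free_v.
pose g' := [eta g with u |-> b u].
have g'L : Lcolouring e L g'.
  case: gL bL => [gL gproper] [bL _]; split=> [y | y z] /=.
    by case: eqP => [->|_].
  case: (eqVneq y u) => [->|yu]; case: (eqVneq z u) => [->|zu] //=.
  + by rewrite eirr.
  + by move=> /g_avoid; rewrite eq_sym.
  + by rewrite esym => /g_avoid.
  + exact: gproper.
have vSu : v \in S :\ u by rewrite !inE eq_sym uv.
have ltSn : #|S :\ u| < n by move: leSn; rewrite (cardsD1 u) uS.
have sub_u : {subset [pred y | y \in S :\ u] <= [pred y | y \in S]}.
  by move=> y /setD1P[].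
have shrink f' : {in ~: S, f' =1 a} ->
    (forall y, y \in S :\ u -> degIn (S :\ u) y + 1 <= lsize (avail L f' (S :\ u) y)) /\
    degIn (S :\ u) v + 2 <= lsize (avail L f' (S :\ u) v).
  move=> off; split=> [y /setD1P[_ /free] |]; last have := free_v;
    exact: degIn_avail_update uS off.
have [free_a free_av] := shrink a (fun _ _ => erefl).
have g'_a : {in ~: S, g' =1 a}.
  move=> y yS /=; have yu : y != u by apply: contraTneq yS => ->; rewrite inE uS.
  by rewrite (negbTE yu) g_off // !inE negb_and -in_setC yS orbT.
have [free_g' free_g'v] := shrink g' g'_a.
have a_g : recol_seq e L [pred y | y \in S :\ u] a g.
  apply: IH ltSn vSu rk_u aL gL _ free_a free_av.
  by move=> y /g_off.
have g_g' : recol_seq e L [pred y | y \in S] g g'.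
  by apply: (recol_seq_at (x := u) uS gL g'L) => y /= /negbTE ->.
have g'_b : recol_seq e L [pred y | y \in S :\ u] g' b.
  apply: IH ltSn vSu rk_u g'L bL _ free_g' free_g'v => y.
  rewrite !inE negb_and negbK => /orP[/eqP -> | yS]; first by rewrite /= eqxx.
  by rewrite g'_a ?inE // ab ?inE.
apply: recol_seq_trans (recol_seq_sub sub_u a_g) _.
exact: recol_seq_trans g_g' (recol_seq_sub sub_u g'_b).
Qed.

End Ranked.

Lemma ranked_of_connect (R : rel T) S v :
  (forall x y, R x y -> e x y && (x \in S)) -> {in S, forall x, connect R v x} ->
  exists r, ranked v r S.
Proof.
move=> RS con; have [r rk] := connect_rank R v.
exists r => x xS xv; have [y Ryx ryx] := rk x (con x xS) xv.
by exists y => //; have /andP[yx ->] := RS _ _ Ryx; rewrite esym.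
Qed.

Lemma lsize_avail_const L f S x c : (forall y, y \notin S -> f y = c) ->
  lsize (L x) <= lsize (avail L f S x) + minn 1 (degIn (~: S) x).
Proof.
move=> f_out; have [no_out | out_pos] := posnP (degIn (~: S) x).
  rewrite no_out addn0; apply: lsize_subset => d dL; apply/availP; split=> // y xy yS.
  by move/eqP: no_out; rewrite cards_eq0 => /eqP/setP/(_ y); rewrite !inE yS xy.
rewrite (minn_idPl out_pos) addnC; apply: leq_trans (lsize_cat [:: c] _).
apply: lsize_subset => d dL; rewrite mem_cat inE; case: eqVneq => //= dc.
by apply/availP; split=> // y _ /f_out ->; rewrite eq_sym.
Qed.

Lemma degIn_avail_const L f S x c :
  (forall y, y \notin S -> f y = c) -> deg e x + 1 <= lsize (L x) ->
  degIn S x + maxn 1 (degIn (~: S) x) <= lsize (avail L f S x).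
Proof.
move=> f_out degL; have := lsize_avail_const L x f_out.
by move: degL; rewrite (deg_degIn S x); lia.
Qed.

End Recolouring.

Theorem mainTheorem9 (T : finType) (C : eqType) (e : rel T) (L : T -> seq C)
  (alpha beta : T -> C) (v w1 w2 : T) :
  simple_graph e ->
  connected_graph e ->
  (forall u, deg e u + 1 <= lsize (L u)) ->
  Lcolouring e L alpha -> Lcolouring e L beta ->
  e v w1 -> e v w2 -> w1 != w2 ->
  alpha w1 = beta w1 -> alpha w1 = alpha w2 -> beta w1 = beta w2 ->
  connected_minus e (mem [:: w1; w2]) ->
  recolourable e L alpha beta /\
  recol_seq e L [pred x | x \notin [:: w1; w2]] alpha beta.
Proof.
move=> [esym eirr] _ degL aL bL vw1 vw2 w12 ab1 aa bb conW.
pose S := [set x | x \notin [:: w1; w2]].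
have outS y : y \notin S -> alpha y = alpha w1 /\ beta y = alpha w1.
  by rewrite inE negbK !inE => /orP[] /eqP ->; split; congruence.
have vS : v \in S.
  by rewrite !inE negb_or; apply/andP; split; [move: vw1 | move: vw2];
    apply: contraTneq => ->; rewrite eirr.
have [r rk] : exists r, ranked e v r S.
  apply: (ranked_of_connect esym (R := [rel a b | [&& e a b,
    a \notin mem [:: w1; w2] & b \notin mem [:: w1; w2]]])).
    by move=> a b /and3P[ab aW _]; rewrite ab inE.
  by move=> x xS; apply: conW; [move: vS | move: xS]; rewrite inE.
have free x : degIn e S x + maxn 1 (degIn e (~: S) x) <= lsize (avail e L alpha S x).
  exact: degIn_avail_const (fun y yS => (outS y yS).1) (degL x).
have out_v : 2 <= degIn e (~: S) v.
  have <- : #|[set w1; w2]| = 2 by rewrite cards2 w12.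
  apply/subset_leq_card/subsetP => y.
  by rewrite !inE => /orP[] /eqP ->; rewrite ?vw1 ?vw2 !eqxx ?orbT.
have ab : {in ~: S, alpha =1 beta}.
  by move=> y; rewrite inE => /outS[-> ->].
have K : recol_seq e L [pred x | x \in S] alpha beta.
  apply: (ranked_recol_seq esym eirr vS rk aL bL ab) => [x _|];
    [have := free x | have := free v]; lia.
by split; apply: recol_seq_sub K => // y; rewrite inE.
Qed.
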